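(* There is no bounded continuous function $w:\mathbb R^2\to\mathbb R^2$ for which there exists a constant $c>0$ such that \[\bigl|\langle x-y,w(x)-w(y)\rangle\bigr|>c\,\|w(x)-w(y)\|\] for every pair $x,y\in\mathbb R^2$ with $\|x-y\|>1$.
   Context: $\langle\cdot,\cdot\rangle$ and $\|\cdot\|$ denote the standard inner product and Euclidean norm on $\mathbb R^2$. *)

From Stdlib Require Import Reals.
From Coquelicot Require Import Coquelicot.
Open Scope R_scope.

Definition ip2 (u v : R * R) : R := fst u * fst v + snd u * snd v.
Definition norm2 (u : R * R) : R := sqrt (ip2 u u).
Definition sub2 (u v : R * R) : R * R := (fst u - fst v, snd u - snd v).

(* The pairing <x - y, w x - w y> never vanishes on the
   connected set of pairs at distance > 1, so it has a constant sign there and,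
   replacing [w] by [-w], it exceeds c |w x - w y|.  Then along any progression
   a, a + v, a + 2v, ... with |v - 2u| <= c/4 for a unit vector u, each increment of
   [w] has length at most 3/c times its u-component.  Two such progressions, from an
   arbitrary z and from a d-approximate maximiser p of <u, w>, reach a common point;
   hence |w z - w p| <= 3/c (<u, w p> - <u, w z>) + 6d/c.  Rotating u from e1 to -e1
   in small steps, the approximate maximisers for e1 and -e1 have almost the same
   image, so <e1, w> and then w itself oscillate by O(d) for every d > 0: w is
   constant, contradicting the strict inequality.  Continuity is used only for the
   sign. *)

From Stdlib Require Import Reals Lra Psatz Classical.
From Coquelicot Require Import Coquelicot.
Open Scope R_scope.

Definition add2 (u v : R * R) : R * R := (fst u + fst v, snd u + snd v).
Definition scal2 (k : R) (u : R * R) : R * R := (k * fst u, k * snd u).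
Definition dir (t : R) : R * R := (cos t, sin t).

Lemma ip2_self_ge0 u : 0 <= ip2 u u.
Proof. unfold ip2; nra. Qed.

Lemma norm2_ge0 u : 0 <= norm2 u.
Proof. apply sqrt_pos. Qed.

Lemma norm2_sqr u : norm2 u * norm2 u = ip2 u u.
Proof. apply sqrt_sqrt, ip2_self_ge0. Qed.

Lemma le_of_sqr_le x y : 0 <= y -> x * x <= y * y -> x <= y.
Proof. intros; nra. Qed.

Lemma ip2_le_norm2 u v : ip2 u v <= norm2 u * norm2 v.
Proof.
  apply le_of_sqr_le; [apply Rmult_le_pos; apply norm2_ge0|].
  replace (norm2 u * norm2 v * (norm2 u * norm2 v))
    with (norm2 u * norm2 u * (norm2 v * norm2 v)) by ring.
  rewrite !norm2_sqr; destruct u as [u1 u2], v as [v1 v2]; unfold ip2; simpl.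
  pose proof (pow2_ge_0 (u1 * v2 - u2 * v1)); nra.
Qed.

Lemma norm2_add_le u v : norm2 (add2 u v) <= norm2 u + norm2 v.
Proof.
  pose proof (norm2_ge0 u); pose proof (norm2_ge0 v).
  apply le_of_sqr_le; [lra|]. rewrite norm2_sqr.
  pose proof (ip2_le_norm2 u v); pose proof (norm2_sqr u); pose proof (norm2_sqr v).
  replace (ip2 (add2 u v) (add2 u v)) with (ip2 u u + 2 * ip2 u v + ip2 v v)
    by (unfold ip2, add2; simpl; ring).
  nra.
Qed.

Lemma norm2_sub_le u v w : norm2 (sub2 u w) <= norm2 (sub2 u v) + norm2 (sub2 v w).
Proof.
  replace (sub2 u w) with (add2 (sub2 u v) (sub2 v w))
    by (unfold add2, sub2; simpl; f_equal; ring).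
  apply norm2_add_le.
Qed.

Lemma norm2_subC u v : norm2 (sub2 u v) = norm2 (sub2 v u).
Proof. unfold norm2, ip2, sub2; simpl; f_equal; ring. Qed.

Lemma norm2_subrr u : norm2 (sub2 u u) = 0.
Proof. unfold norm2, ip2, sub2; simpl. rewrite <- sqrt_0; f_equal; ring. Qed.

Lemma norm2_scal k u : norm2 (scal2 k u) = Rabs k * norm2 u.
Proof.
  unfold norm2. rewrite <- sqrt_Rsqr_abs, <- sqrt_mult_alt by apply Rle_0_sqr.
  f_equal. unfold ip2, scal2, Rsqr; simpl; ring.
Qed.

Lemma ip2_ge_neg_norm2 u v : - (norm2 u * norm2 v) <= ip2 u v.
Proof.
  pose proof (ip2_le_norm2 u (scal2 (-1) v)) as H.
  rewrite norm2_scal, Rabs_m1 in H.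
  replace (ip2 u (scal2 (-1) v)) with (- ip2 u v) in H by (unfold ip2, scal2; simpl; ring).
  lra.
Qed.

Lemma norm2_gt1 u : 1 < ip2 u u -> 1 < norm2 u.
Proof. intro H. unfold norm2. rewrite <- sqrt_1. apply sqrt_lt_1_alt. lra. Qed.

Lemma norm2_dir t : norm2 (dir t) = 1.
Proof.
  unfold norm2, ip2, dir; simpl. pose proof (sin2_cos2 t) as H. unfold Rsqr in H.
  rewrite <- sqrt_1; f_equal; lra.
Qed.

Lemma norm2_dir_sub_le a b : Rabs (a - b) <= PI / 2 -> norm2 (sub2 (dir a) (dir b)) <= Rabs (a - b).
Proof.
  intro Hab. apply le_of_sqr_le; [apply Rabs_pos|]. rewrite norm2_sqr.
  replace (ip2 (sub2 (dir a) (dir b)) (sub2 (dir a) (dir b))) with (2 - 2 * cos (a - b)).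
  2:{ rewrite cos_minus. pose proof (sin2_cos2 a); pose proof (sin2_cos2 b).
      unfold Rsqr in *. unfold ip2, sub2, dir; simpl. lra. }
  apply Rabs_le_between in Hab.
  destruct (cos_bound (a - b) 0) as [Hcos _]; try lra.
  unfold cos_approx, cos_term in Hcos; simpl in Hcos.
  rewrite <- Rabs_mult, Rabs_pos_eq by apply Rle_0_sqr. lra.
Qed.

Definition far (x y : R * R) : Prop := 1 < norm2 (sub2 x y).
Definition mono_form (w : R * R -> R * R) (x y : R * R) : R := ip2 (sub2 x y) (sub2 (w x) (w y)).
Definition seg (x x' : R * R) (s : R) : R * R := add2 x (scal2 s (sub2 x' x)).

Lemma continuous_seg x x' s : continuous (seg x x') s.
Proof.
  apply (continuous_plus (V := prod_NormedModule _ R_NormedModule R_NormedModule)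
           (fun _ => x) (fun s : R => scal s (minus x' x))).
  - apply continuous_const.
  - apply (continuous_scal_l (V := prod_NormedModule _ R_NormedModule R_NormedModule)
             (fun s : R => s)), continuous_id.
Qed.

Lemma continuous_ip2 (f g : R -> R * R) t :
  continuous f t -> continuous g t -> continuous (fun s => ip2 (f s) (g s)) t.
Proof.
  intros Hf Hg.
  assert (Hfst : forall h : R -> R * R, continuous h t -> continuous (fun s => fst (h s)) t).
  { intros h Hh. apply (continuous_comp h fst); [exact Hh|]. destruct (h t); apply continuous_fst. }
  assert (Hsnd : forall h : R -> R * R, continuous h t -> continuous (fun s => snd (h s)) t).
  { intros h Hh. apply (continuous_comp h snd); [exact Hh|]. destruct (h t); apply continuous_snd. }
  unfold ip2. apply (continuous_plus (V := R_NormedModule) (fun s => mult (fst (f s)) (fst (g s)))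
                                     (fun s => mult (snd (f s)) (snd (g s))));
    apply (continuous_mult (K := R_AbsRing)); auto.
Qed.

Lemma continuous_sub2 (f g : R -> R * R) t :
  continuous f t -> continuous g t -> continuous (fun s => sub2 (f s) (g s)) t.
Proof. apply (continuous_minus (V := prod_NormedModule _ R_NormedModule R_NormedModule)). Qed.

Lemma seg_rev x x' s : seg x' x s = seg x x' (1 - s).
Proof. unfold seg, add2, scal2, sub2; simpl; f_equal; ring. Qed.

Lemma seg0 x x' : seg x x' 0 = x.
Proof. unfold seg, add2, scal2, sub2; destruct x; simpl; f_equal; ring. Qed.

Lemma seg1 x x' : seg x x' 1 = x'.
Proof. unfold seg, add2, scal2, sub2; destruct x'; simpl; f_equal; ring. Qed.

Lemma pos_of_nonvanishing (h : R -> R) :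
  (forall s, continuous h s) -> (forall s, 0 <= s <= 1 -> h s <> 0) ->
  0 < h 0 -> 0 < h 1.
Proof.
  intros Hh Hnz H0.
  destruct (Rle_or_lt (h 1) 0) as [H1|]; [exfalso|assumption].
  destruct (IVT_gen_consistent h 0 1 0 Hh) as [z [Hz Hz0]].
  - rewrite Rmin_right, Rmax_left; lra.
  - rewrite Rmin_left, Rmax_right in Hz by lra.
    exact (Hnz z Hz Hz0).
Qed.

Lemma far_of_ip2 x y : 1 < ip2 (sub2 x y) (sub2 x y) -> far x y.
Proof. apply norm2_gt1. Qed.

Lemma ip2_of_far x y : far x y -> 1 < ip2 (sub2 x y) (sub2 x y).
Proof.
  unfold far; intro H. rewrite <- norm2_sqr. nra.
Qed.

Lemma far_seg_translate x y s :
  far x y -> far (seg x (sub2 x y) s) (seg y (0, 0) s).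
Proof.
  unfold far; replace (sub2 (seg x (sub2 x y) s) (seg y (0, 0) s)) with (sub2 x y); [auto|].
  unfold seg, add2, scal2, sub2; simpl; f_equal; ring.
Qed.

Lemma far_seg_dilate x s :
  0 <= s -> far x (0, 0) -> far (seg x (scal2 2 x) s) (seg (0, 0) (0, 0) s).
Proof.
  intros Hs Hx. apply ip2_of_far in Hx. apply far_of_ip2.
  replace (ip2 (sub2 (seg x (scal2 2 x) s) (seg (0, 0) (0, 0) s))
               (sub2 (seg x (scal2 2 x) s) (seg (0, 0) (0, 0) s)))
    with ((1 + s) * (1 + s) * ip2 (sub2 x (0, 0)) (sub2 x (0, 0)))
    by (unfold ip2, seg, add2, scal2, sub2; simpl; ring).
  set (n := ip2 (sub2 x (0, 0)) (sub2 x (0, 0))) in *.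
  assert (1 * n <= (1 + s) * (1 + s) * n) by (apply Rmult_le_compat_r; nra).
  lra.
Qed.

Lemma far_seg_wide p q s : 0 <= s <= 1 ->
  4 <= ip2 p p -> 4 <= ip2 q q -> 0 <= ip2 p q -> far (seg p q s) (seg (0, 0) (0, 0) s).
Proof.
  intros Hs Hp Hq Hpq. apply far_of_ip2.
  replace (ip2 (sub2 (seg p q s) (seg (0, 0) (0, 0) s)) (sub2 (seg p q s) (seg (0, 0) (0, 0) s)))
    with ((1 - s) * (1 - s) * ip2 p p + s * s * ip2 q q + 2 * (s * (1 - s)) * ip2 p q)
    by (unfold ip2, seg, add2, scal2, sub2; simpl; ring).
  assert ((1 - s) * (1 - s) * 4 <= (1 - s) * (1 - s) * ip2 p p)
    by (apply Rmult_le_compat_l; nra).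
  assert (s * s * 4 <= s * s * ip2 q q) by (apply Rmult_le_compat_l; nra).
  assert (0 <= s * (1 - s) * ip2 p q) by (apply Rmult_le_pos; nra).
  nra.
Qed.

Lemma vertical_bridge p : exists q, ip2 q q = 4 /\ 0 <= ip2 p q /\ ip2 q (2, 0) = 0.
Proof.
  destruct (Rle_or_lt 0 (snd p)).
  - exists (0, 2); unfold ip2; simpl; repeat split; lra.
  - exists (0, -2); unfold ip2; simpl; repeat split; lra.
Qed.

Section SignOfMonoForm.

Variable w : R * R -> R * R.
Hypothesis w_cont : forall x, continuous w x.
Hypothesis mono_form_neq0 : forall x y, far x y -> mono_form w x y <> 0.

Lemma mono_form_pos_seg x y x' y' :
  (forall s, 0 <= s <= 1 -> far (seg x x' s) (seg y y' s)) ->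
  0 < mono_form w x y -> 0 < mono_form w x' y'.
Proof.
  intros Hfar Hpos.
  assert (Hw : forall z z' s, continuous (fun s => w (seg z z' s)) s).
  { intros z z' s. apply (continuous_comp (seg z z') w); [apply continuous_seg | apply w_cont]. }
  rewrite <- (seg1 x x'), <- (seg1 y y').
  apply (pos_of_nonvanishing (fun s => mono_form w (seg x x' s) (seg y y' s))).
  - intro s. unfold mono_form. apply continuous_ip2.
    + apply (continuous_sub2 (seg x x') (seg y y')); apply continuous_seg.
    + apply (continuous_sub2 (fun s => w (seg x x' s)) (fun s => w (seg y y' s))); apply Hw.
  - intros s Hs. apply mono_form_neq0, Hfar, Hs.
  - rewrite !seg0; exact Hpos.
Qed.

Lemma mono_form_pos_seg_iff x y x' y' :
  (forall s, 0 <= s <= 1 -> far (seg x x' s) (seg y y' s)) ->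
  0 < mono_form w x y <-> 0 < mono_form w x' y'.
Proof.
  intro Hfar; split; apply mono_form_pos_seg; auto.
  intros s Hs; rewrite (seg_rev x x'), (seg_rev y y'); apply Hfar; lra.
Qed.

(* Segments of far pairs lead from (x, y) to (x - y, 0), to (2 (x - y), 0), then
   through (0, 2) or (0, -2) to (2, 0). *)
Lemma mono_form_pos_iff_ref x y :
  far x y -> 0 < mono_form w x y <-> 0 < mono_form w (2, 0) (0, 0).
Proof.
  intro Hxy. set (d := sub2 x y).
  assert (Hd : far d (0, 0)).
  { unfold far; replace (sub2 d (0, 0)) with (sub2 x y); [exact Hxy|].
    unfold d, sub2; simpl; f_equal; ring. }
  rewrite (mono_form_pos_seg_iff x y d (0, 0)) by (intros; apply far_seg_translate, Hxy).
  rewrite (mono_form_pos_seg_iff d (0, 0) (scal2 2 d) (0, 0))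
    by (intros s Hs; apply far_seg_dilate; [apply Hs | exact Hd]).
  assert (H2d : 4 <= ip2 (scal2 2 d) (scal2 2 d)).
  { apply ip2_of_far in Hd.
    replace (ip2 (scal2 2 d) (scal2 2 d)) with (4 * ip2 (sub2 d (0, 0)) (sub2 d (0, 0)))
      by (unfold ip2, scal2, sub2; simpl; ring).
    lra. }
  destruct (vertical_bridge (scal2 2 d)) as [q [Hq [Hdq Hq0]]].
  rewrite (mono_form_pos_seg_iff (scal2 2 d) (0, 0) q (0, 0))
    by (intros s Hs; apply far_seg_wide; [exact Hs | exact H2d | lra | exact Hdq]).
  apply mono_form_pos_seg_iff.
  intros s Hs; apply far_seg_wide; [exact Hs | lra | unfold ip2; simpl; lra | lra].
Qed.

End SignOfMonoForm.

Lemma approx_sup {T : Type} (f : T -> R) (x0 : T) B d :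
  (forall z, f z <= B) -> 0 < d -> exists p, forall z, f z < f p + d.
Proof.
  intros HB Hd.
  destruct (completeness (fun r => exists z, r = f z)) as [L [HL1 HL2]].
  - exists B; intros r [z ->]; apply HB.
  - exists (f x0), x0; reflexivity.
  - destruct (classic (exists p, L - d < f p)) as [[p Hp]|Hn].
    + exists p; intro z. assert (f z <= L) by (apply HL1; exists z; reflexivity). lra.
    + exfalso. assert (L <= L - d); [|lra].
      apply HL2; intros r [z ->]. apply Rnot_lt_le; intro Hlt; apply Hn; exists z; exact Hlt.
Qed.

Section BoundedCoerciveMap.

Variable w : R * R -> R * R.
Variables M c : R.
Hypothesis c_pos : 0 < c.
Hypothesis c_le1 : c <= 1. (* keeps the steps 2u + e, |e| <= c/4, far *)
Hypothesis w_bounded : forall x, norm2 (w x) <= M.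
Hypothesis w_coercive : forall x y, far x y -> c * norm2 (sub2 (w x) (w y)) < mono_form w x y.

Definition climbs (u a b : R * R) : Prop :=
  norm2 (sub2 (w b) (w a)) <= 3 / c * ip2 u (sub2 (w b) (w a)).

Lemma climbs_refl u a : climbs u a a.
Proof.
  unfold climbs; rewrite norm2_subrr.
  replace (ip2 u (sub2 (w a) (w a))) with 0 by (unfold ip2, sub2; simpl; ring). lra.
Qed.

Lemma climbs_trans u a b b' : climbs u a b -> climbs u b b' -> climbs u a b'.
Proof.
  unfold climbs; intros Hab Hbb'.
  pose proof (norm2_sub_le (w b') (w b) (w a)).
  replace (ip2 u (sub2 (w b') (w a))) with (ip2 u (sub2 (w b') (w b)) + ip2 u (sub2 (w b) (w a)))
    by (unfold ip2, sub2; simpl; ring).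
  lra.
Qed.

Lemma climbs_step t e a :
  norm2 e <= c / 4 -> climbs (dir t) a (add2 a (add2 (scal2 2 (dir t)) e)).
Proof.
  intro He. set (v := add2 (scal2 2 (dir t)) e). set (b := add2 a v).
  set (d := sub2 (w b) (w a)).
  assert (Hv : sub2 b a = v) by (unfold b, v, add2, sub2; simpl; f_equal; ring).
  assert (Hfar : far b a).
  { apply far_of_ip2; rewrite Hv.
    pose proof (ip2_ge_neg_norm2 (dir t) e); rewrite norm2_dir in *.
    pose proof (norm2_ge0 e); pose proof (ip2_self_ge0 e).
    replace (ip2 v v) with (4 * ip2 (dir t) (dir t) + 4 * ip2 (dir t) e + ip2 e e)
      by (unfold v, ip2, add2, scal2; simpl; ring).
    rewrite <- norm2_sqr, norm2_dir. lra. }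
  pose proof (w_coercive b a Hfar) as Hc; unfold mono_form in Hc; fold d in Hc; rewrite Hv in Hc.
  replace (ip2 v d) with (2 * ip2 (dir t) d + ip2 e d) in Hc
    by (unfold v, ip2, add2, scal2; simpl; ring).
  (* c |d| < <v, d> = 2 <u, d> + <e, d> <= 2 <u, d> + c/4 |d|, so |d| < 8/(3c) <u, d>. *)
  pose proof (ip2_le_norm2 e d); pose proof (norm2_ge0 d); pose proof (norm2_ge0 e).
  assert (ip2 e d <= c / 4 * norm2 d) by nra.
  assert (3 / c * c = 3) by (field; lra).
  assert (0 < 3 / c) by (apply Rdiv_lt_0_compat; lra).
  unfold climbs; fold d. nra.
Qed.

Lemma climbs_iter t e a n :
  norm2 e <= c / 4 -> climbs (dir t) a (add2 a (scal2 (INR n) (add2 (scal2 2 (dir t)) e))).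
Proof.
  intro He; induction n as [|n IH].
  - replace (add2 a _) with a by (destruct a; unfold add2, scal2; simpl; f_equal; ring).
    apply climbs_refl.
  - eapply climbs_trans; [exact IH|].
    replace (add2 a (scal2 (INR (S n)) (add2 (scal2 2 (dir t)) e)))
      with (add2 (add2 a (scal2 (INR n) (add2 (scal2 2 (dir t)) e))) (add2 (scal2 2 (dir t)) e))
      by (rewrite S_INR; unfold add2, scal2; simpl; f_equal; ring).
    apply climbs_step, He.
Qed.

Definition near_max (u : R * R) (d : R) (p : R * R) : Prop :=
  forall z, ip2 u (w z) < ip2 u (w p) + d.

Lemma exists_near_max t d : 0 < d -> exists p, near_max (dir t) d p.
Proof.
  apply (approx_sup (fun z => ip2 (dir t) (w z)) (0, 0) M).
  intro z. pose proof (ip2_le_norm2 (dir t) (w z)); pose proof (w_bounded z).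
  rewrite norm2_dir in *. lra.
Qed.

Lemma near_max_bound t d p z : near_max (dir t) d p ->
  norm2 (sub2 (w z) (w p)) <= 3 / c * (ip2 (dir t) (w p) - ip2 (dir t) (w z)) + 6 / c * d.
Proof.
  intro Hp. set (u := dir t).
  destruct (INR_unbounded (4 * norm2 (sub2 p z) / c)) as [n Hn].
  assert (Hn0 : 0 < INR n).
  { pose proof (norm2_ge0 (sub2 p z)).
    assert (0 <= 4 * norm2 (sub2 p z) / c) by (apply Rdiv_le_0_compat; lra). lra. }
  set (e := scal2 (/ INR n) (sub2 p z)).
  assert (He : norm2 e <= c / 4).
  { unfold e; rewrite norm2_scal, Rabs_pos_eq by (left; apply Rinv_0_lt_compat, Hn0).
    apply (Rmult_le_reg_l (INR n)); [exact Hn0|].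
    rewrite <- Rmult_assoc, Rinv_r, Rmult_1_l by lra.
    apply (Rmult_lt_compat_r (c / 4)) in Hn; [|lra].
    replace (4 * norm2 (sub2 p z) / c * (c / 4)) with (norm2 (sub2 p z)) in Hn by (field; lra).
    lra. }
  assert (He0 : norm2 (0, 0) <= c / 4).
  { replace (0, 0) with (sub2 p p) by (unfold sub2; f_equal; ring).
    rewrite norm2_subrr; lra. }
  set (y := add2 p (scal2 (INR n) (add2 (scal2 2 u) (0, 0)))).
  assert (Hz : climbs u z y).
  { replace y with (add2 z (scal2 (INR n) (add2 (scal2 2 u) e)))
      by (unfold y, e, add2, scal2, sub2; simpl; f_equal; field; lra).
    apply climbs_iter, He. }
  assert (Hpy : climbs u p y) by (apply climbs_iter, He0).
  (* Both progressions end at [y], which cannot beat [p] by more than [d] in direction [u]. *)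
  unfold climbs in Hz, Hpy.
  replace (ip2 u (sub2 (w y) (w z))) with (ip2 u (w y) - ip2 u (w z)) in Hz
    by (unfold ip2, sub2; simpl; ring).
  replace (ip2 u (sub2 (w y) (w p))) with (ip2 u (w y) - ip2 u (w p)) in Hpy
    by (unfold ip2, sub2; simpl; ring).
  pose proof (Hp y) as Hy; fold u in Hy.
  pose proof (norm2_sub_le (w z) (w y) (w p)) as Htri.
  rewrite (norm2_subC (w z) (w y)) in Htri.
  assert (0 < 3 / c) by (apply Rdiv_lt_0_compat; lra).
  replace (6 / c) with (2 * (3 / c)) by (field; lra).
  assert (3 / c * (ip2 u (w y) - ip2 u (w p)) <= 3 / c * d) by (apply Rmult_le_compat_l; lra).
  lra.
Qed.

Lemma near_max_close t t' d p p' :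
  norm2 (sub2 (dir t) (dir t')) <= c / 3 ->
  near_max (dir t) d p -> near_max (dir t') d p' -> norm2 (sub2 (w p) (w p')) <= 12 / c * d.
Proof.
  intros Hu Hp Hp'.
  pose proof (near_max_bound t d p p' Hp) as B1.
  pose proof (near_max_bound t' d p' p Hp') as B2.
  rewrite norm2_subC in B1.
  pose proof (ip2_le_norm2 (sub2 (dir t) (dir t')) (sub2 (w p) (w p'))) as Hcs.
  replace (ip2 (sub2 (dir t) (dir t')) (sub2 (w p) (w p'))) with
     ((ip2 (dir t) (w p) - ip2 (dir t) (w p')) + (ip2 (dir t') (w p') - ip2 (dir t') (w p))) in Hcs
    by (unfold ip2, sub2; simpl; ring).
  set (D := norm2 (sub2 (w p) (w p'))) in *.
  assert (HD : norm2 (sub2 (dir t) (dir t')) * D <= c / 3 * D)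
    by (apply Rmult_le_compat_r; [apply norm2_ge0 | exact Hu]).
  assert (HK : 3 / c * (norm2 (sub2 (dir t) (dir t')) * D) <= D).
  { apply Rle_trans with (3 / c * (c / 3 * D)).
    - apply Rmult_le_compat_l; [apply Rlt_le, Rdiv_lt_0_compat|]; lra.
    - right; field; lra. }
  assert (3 / c * ((ip2 (dir t) (w p) - ip2 (dir t) (w p')) + (ip2 (dir t') (w p') - ip2 (dir t') (w p)))
          <= 3 / c * (norm2 (sub2 (dir t) (dir t')) * D))
    by (apply Rmult_le_compat_l; [apply Rlt_le, Rdiv_lt_0_compat|]; lra).
  replace (6 / c) with (2 * (3 / c)) in B1, B2 by (field; lra).
  replace (12 / c) with (4 * (3 / c)) by (field; lra).
  lra.
Qed.

Lemma near_max_rotate h d : 0 < d -> 0 < h <= c / 3 -> forall k p q,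
  near_max (dir 0) d p -> near_max (dir (INR k * h)) d q ->
  norm2 (sub2 (w p) (w q)) <= INR (S k) * (12 / c * d).
Proof.
  intros Hd Hh; induction k as [|k IH]; intros p q Hp Hq.
  - rewrite Rmult_0_l in Hq. rewrite Rmult_1_l.
    apply (near_max_close 0 0 d); auto. rewrite norm2_subrr; lra.
  - destruct (exists_near_max (INR k * h) d Hd) as [q' Hq'].
    pose proof (IH p q' Hp Hq') as Hpq'.
    assert (Hq'q : norm2 (sub2 (w q') (w q)) <= 12 / c * d).
    { apply (near_max_close (INR k * h) (INR (S k) * h) d); auto.
      assert (Hstep : Rabs (INR k * h - INR (S k) * h) = h).
      { replace (INR k * h - INR (S k) * h) with (- h) by (rewrite S_INR; ring).
        rewrite Rabs_Ropp, Rabs_pos_eq; lra. }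
      pose proof PI2_1.
      eapply Rle_trans; [apply norm2_dir_sub_le|]; rewrite Hstep; lra. }
    pose proof (norm2_sub_le (w p) (w q') (w q)).
    rewrite (S_INR (S k)). lra.
Qed.

Lemma oscillation_linear : exists K, 0 < K /\ forall d, 0 < d ->
  exists p, forall z, norm2 (sub2 (w z) (w p)) <= K * d.
Proof.
  pose proof PI_RGT_0 as Hpi.
  destruct (INR_unbounded (3 * PI / c)) as [N HN].
  assert (HN0 : 0 < INR N).
  { assert (0 < 3 * PI / c) by (apply Rdiv_lt_0_compat; lra). lra. }
  assert (Hh : 0 < PI / INR N <= c / 3).
  { split; [apply Rdiv_lt_0_compat; lra|].
    apply (Rmult_le_reg_r (INR N)); [exact HN0|].
    replace (PI / INR N * INR N) with PI by (field; lra).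
    apply (Rmult_lt_compat_r (c / 3)) in HN; [|lra].
    replace (3 * PI / c * (c / 3)) with PI in HN by (field; lra). lra. }
  assert (Hc' : 0 < 3 / c) by (apply Rdiv_lt_0_compat; lra).
  assert (Hc'' : 0 < 12 / c) by (apply Rdiv_lt_0_compat; lra).
  pose proof (pos_INR (S N)).
  exists (3 / c * (INR (S N) * (12 / c) + 1) + 6 / c); split.
  { assert (0 < 3 / c * (INR (S N) * (12 / c) + 1)) by (apply Rmult_lt_0_compat; nra).
    assert (0 < 6 / c) by (apply Rdiv_lt_0_compat; lra). lra. }
  intros d Hd.
  destruct (exists_near_max 0 d Hd) as [p Hp].
  destruct (exists_near_max (INR N * (PI / INR N)) d Hd) as [q Hq].
  pose proof (near_max_rotate (PI / INR N) d Hd Hh N p q Hp Hq) as Hpq.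
  replace (INR N * (PI / INR N)) with PI in Hq by (field; lra).
  exists p; intro z.
  pose proof (near_max_bound 0 d p z Hp) as Hz.
  pose proof (ip2_le_norm2 (dir 0) (sub2 (w p) (w q))) as Hcs; rewrite norm2_dir in Hcs.
  pose proof (Hq z) as Hqz.
  assert (ip2 (dir 0) (w p) - ip2 (dir 0) (w z) <= INR (S N) * (12 / c * d) + d).
  { unfold ip2, dir, sub2 in *; simpl in *.
    rewrite cos_PI, sin_PI in Hqz; rewrite cos_0, sin_0 in *. lra. }
  assert (3 / c * (ip2 (dir 0) (w p) - ip2 (dir 0) (w z)) <= 3 / c * (INR (S N) * (12 / c * d) + d))
    by (apply Rmult_le_compat_l; lra).
  lra.
Qed.

Lemma w_constant x y : norm2 (sub2 (w x) (w y)) = 0.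
Proof.
  destruct oscillation_linear as [K [HK Hosc]].
  destruct (Rle_lt_or_eq_dec 0 _ (norm2_ge0 (sub2 (w x) (w y)))) as [Hlt|]; [exfalso|auto].
  destruct (Hosc (norm2 (sub2 (w x) (w y)) / (4 * K))) as [p Hp]; [apply Rdiv_lt_0_compat; lra|].
  pose proof (norm2_sub_le (w x) (w p) (w y)) as Htri.
  rewrite (norm2_subC (w p) (w y)) in Htri.
  pose proof (Hp x); pose proof (Hp y).
  replace (K * (norm2 (sub2 (w x) (w y)) / (4 * K))) with (norm2 (sub2 (w x) (w y)) / 4) in *
    by (field; lra).
  lra.
Qed.

Lemma bounded_coercive_absurd : False.
Proof.
  assert (Hfar : far (2, 0) (0, 0)) by (apply far_of_ip2; unfold ip2, sub2; simpl; lra).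
  pose proof (w_coercive _ _ Hfar) as H; unfold mono_form in H.
  pose proof (ip2_le_norm2 (sub2 (2, 0) (0, 0)) (sub2 (w (2, 0)) (w (0, 0)))).
  rewrite w_constant in *. lra.
Qed.

End BoundedCoerciveMap.

Lemma mono_form_opp w x y : mono_form (fun z => scal2 (-1) (w z)) x y = - mono_form w x y.
Proof. unfold mono_form, ip2, scal2, sub2; simpl; ring. Qed.

Lemma norm2_sub_opp u v : norm2 (sub2 (scal2 (-1) u) (scal2 (-1) v)) = norm2 (sub2 u v).
Proof. unfold norm2, ip2, scal2, sub2; simpl; f_equal; ring. Qed.

Lemma mono_form_sign_far w :
  (forall x, continuous w x) -> (forall x y, far x y -> mono_form w x y <> 0) ->
  (forall x y, far x y -> 0 < mono_form w x y) \/
  (forall x y, far x y -> mono_form w x y < 0).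
Proof.
  intros Hw Hnz.
  assert (Href : far (2, 0) (0, 0)) by (apply far_of_ip2; unfold ip2, sub2; simpl; lra).
  destruct (Rdichotomy _ _ (Hnz _ _ Href)) as [Hneg|Hpos].
  - right; intros x y Hxy.
    set (w' := fun z => scal2 (-1) (w z)).
    assert (Hw' : forall x, continuous w' x).
    { intro z. apply (continuous_scal_r (V := prod_NormedModule _ R_NormedModule R_NormedModule)), Hw. }
    assert (Hnz' : forall x y, far x y -> mono_form w' x y <> 0).
    { intros a b Hab. unfold w'; rewrite mono_form_opp. apply Ropp_neq_0_compat, Hnz, Hab. }
    pose proof (mono_form_pos_iff_ref w' Hw' Hnz' x y Hxy) as Hiff.
    unfold w' in Hiff; rewrite !mono_form_opp in Hiff.
    apply Ropp_lt_cancel; rewrite Ropp_0; apply Hiff; lra.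
  - left; intros x y Hxy. apply (mono_form_pos_iff_ref w Hw Hnz x y Hxy), Hpos.
Qed.

Lemma no_bounded_coercive w M c : 0 < c -> (forall x, norm2 (w x) <= M) ->
  (forall x y, far x y -> c * norm2 (sub2 (w x) (w y)) < mono_form w x y) -> False.
Proof.
  intros Hc HM Hcoer.
  apply (bounded_coercive_absurd w M (Rmin c 1)); auto.
  - apply Rmin_glb_lt; lra.
  - apply Rmin_r.
  - intros x y Hxy. eapply Rle_lt_trans; [|apply Hcoer, Hxy].
    apply Rmult_le_compat_r; [apply norm2_ge0 | apply Rmin_l].
Qed.

Theorem theorem4 :
  ~ exists w : R * R -> R * R,
      (forall x, continuous w x) /\
      (exists M : R, forall x, norm2 (w x) <= M) /\
      (exists c : R, c > 0 /\
         forall x y : R * R, norm2 (sub2 x y) > 1 ->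
           Rabs (ip2 (sub2 x y) (sub2 (w x) (w y))) > c * norm2 (sub2 (w x) (w y))).
Proof.
  intros [w [Hw [[M HM] [c [Hc H]]]]].
  assert (Hnz : forall x y, far x y -> mono_form w x y <> 0).
  { intros x y Hxy E. pose proof (H x y Hxy) as Hxy'. pose proof (norm2_ge0 (sub2 (w x) (w y))).
    fold (mono_form w x y) in Hxy'. rewrite E, Rabs_R0 in Hxy'. nra. }
  destruct (mono_form_sign_far w Hw Hnz) as [Hpos|Hneg].
  - apply (no_bounded_coercive w M c Hc HM). intros x y Hxy.
    pose proof (H x y Hxy) as Hxy'; fold (mono_form w x y) in Hxy'.
    rewrite Rabs_pos_eq in Hxy' by (apply Rlt_le, Hpos, Hxy). exact Hxy'.
  - apply (no_bounded_coercive (fun x => scal2 (-1) (w x)) M c Hc).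
    + intro x. rewrite norm2_scal, Rabs_m1, Rmult_1_l. apply HM.
    + intros x y Hxy. rewrite mono_form_opp, norm2_sub_opp.
      pose proof (H x y Hxy) as Hxy'; fold (mono_form w x y) in Hxy'.
      rewrite Rabs_left in Hxy' by (apply Hneg, Hxy). exact Hxy'.
Qed.
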